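(* Let $m\geq2$. For every $i=1,\dots,m-1$, $$s^{(m)}_{i,p}\,(M^{(m)}_{i,p})^{\frac{p-1}{2}}\to0\quad\text{and consequently}\quad r^{(m)}_{i,p}\,(M^{(m)}_{i,p})^{\frac{p-1}{2}}\to0\qquad\text{as }p\to p_S^-.$$
   Context: Standing setting: $N\geq3$, $B$ unit ball of $\mathbb{R}^N$ centered at $0$, $p_S=\frac{N+2}{N-2}$. $u^{(m)}_p$ is the unique radial solution of $-\Delta u=|u|^{p-1}u$ in $B$, $u=0$ on $\partial B$, with exactly $m$ nodal regions and $u^{(m)}_p(0)>0$. Nodal radii $0<r^{(m)}_{1,p}<\dots<r^{(m)}_{m-1,p}<r^{(m)}_{m,p}:=1$; $s^{(m)}_{i,p}\in(r^{(m)}_{i,p},r^{(m)}_{i+1,p})$ is the unique critical point of $r\mapsto u^{(m)}_p(r)$ there; $M^{(m)}_{i,p}=|u^{(m)}_p(s^{(m)}_{i,p})|$. *)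

From Stdlib Require Import Reals Lra.
Open Scope R_scope.

Definition pS (N : nat) : R := (INR N + 2) / (INR N - 2).

Definition nl (p t : R) : R :=
  if Req_EM_T t 0 then 0 else Rpower (Rabs t) (p - 1) * t.

(* u is the (evenly extended) radial profile of a classical radial solution
   of -Δu = |u|^{p-1}u in the unit ball of R^N, u = 0 on the boundary:
   u is C^2 on (-1,1) (with derivatives u1, u2), even, satisfies the radial
   ODE u'' + (N-1)/r u' + |u|^{p-1}u = 0 on (0,1), is continuous on [0,1]
   and vanishes at r = 1. *)
Definition radial_sol (N : nat) (p : R) (u u1 u2 : R -> R) : Prop :=
  (forall r, -1 < r < 1 -> u (- r) = u r) /\
  (forall r, -1 < r < 1 -> derivable_pt_lim u r (u1 r)) /\
  (forall r, -1 < r < 1 -> derivable_pt_lim u1 r (u2 r)) /\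
  (forall r, -1 < r < 1 -> continuity_pt u2 r) /\
  (forall r, 0 < r < 1 -> u2 r + (INR N - 1) / r * u1 r + nl p (u r) = 0) /\
  (forall eps, 0 < eps -> exists delta, 0 < delta /\
      forall r, 1 - delta < r < 1 -> Rabs (u r) < eps) /\
  u 1 = 0.

(* u has exactly m nodal regions, u(0) > 0, and rad i (1 <= i <= m-1) are
   its nodal radii in increasing order, rad m = 1. *)
Definition nodal_radii (m : nat) (u : R -> R) (rad : nat -> R) : Prop :=
  0 < u 0 /\
  rad m = 1 /\
  (forall i, (1 <= i <= m - 1)%nat -> 0 < rad i < 1 /\ u (rad i) = 0) /\
  (forall i, (1 <= i < m)%nat -> rad i < rad (S i)) /\
  (forall t, 0 <= t < 1 -> u t = 0 ->
      exists i, (1 <= i <= m - 1)%nat /\ t = rad i).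

Definition crit_points (m : nat) (u1 : R -> R) (rad s : nat -> R) : Prop :=
  forall i, (1 <= i <= m - 1)%nat ->
    rad i < s i < rad (S i) /\ u1 (s i) = 0 /\
    (forall t, rad i < t < rad (S i) -> u1 t = 0 -> t = s i).

Definition tends_to_0_left (f : R -> R) (p0 : R) : Prop :=
  forall eps, 0 < eps -> exists delta, 0 < delta /\
    forall p, 1 < p -> p0 - delta < p < p0 -> Rabs (f p) < eps.

(* The Emden-Fowler change of variables r = e^t, v(t) = r^(2/(p-1)) u(r) turns the radial
   equation into the autonomous v'' = A v' + b v - |v|^(p-1) v, where A = 4/(p-1) + 2 - N
   is positive and tends to 0 as p -> p_S.  Its energy H = v'^2/2 - b v^2/2 + |v|^(p+1)/(p+1)
   vanishes at t = -oo and satisfies H' = A v'^2.  As long as H <= 1, v and v' stay below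
   constants independent of p, and on an interval where v' keeps its sign H grows by at
   most A sup|v'| |Delta v|; up to the i-th critical point of u there are at most 3i such
   intervals, so H(ln s_i) = O(A).  At a critical point v' = (2/(p-1)) v, whence
   |v(ln s_i)|^(p+1)/(p+1) <= H(ln s_i) -> 0, and |v(ln s_i)|^((p-1)/2) = s_i M_i^((p-1)/2),
   while r_i < s_i. *)

From Stdlib Require Import Reals Ranalysis5 Lra Lia Psatz.
Open Scope R_scope.

Lemma Rpower_pos x y : 0 < Rpower x y.
Proof. apply exp_pos. Qed.

Lemma Rpower_1_l y : Rpower 1 y = 1.
Proof. unfold Rpower. rewrite ln_1, Rmult_0_r. apply exp_0. Qed.

Lemma exp_le_compat x y : x <= y -> exp x <= exp y.
Proof. intros [H| ->]; [left; now apply exp_increasing|lra]. Qed.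

Lemma exp_between_ln x a b : 0 < a -> 0 < b -> ln a < x < ln b -> a < exp x < b.
Proof.
  intros Ha Hb [H1 H2].
  split; [rewrite <- (exp_ln a) by exact Ha|rewrite <- (exp_ln b) by exact Hb];
    now apply exp_increasing.
Qed.

Lemma ln_nonpos x : 0 < x -> x <= 1 -> ln x <= 0.
Proof.
  intros Hx [H| ->]; [rewrite <- ln_1; left; now apply ln_increasing|rewrite ln_1; lra].
Qed.

Lemma exp_mul_eventually_le k theta T : 0 < k -> 0 < theta ->
  exists tau, tau < T /\ forall t, t <= tau -> exp (k * t) <= theta.
Proof.
  intros Hk Hth. exists (Rmin (T - 1) (ln theta / k)).
  split; [apply Rle_lt_trans with (T - 1); [apply Rmin_l|lra]|].
  intros t Ht. rewrite <- (exp_ln theta) by exact Hth. apply exp_le_compat.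
  assert (Htk : t <= ln theta / k) by (apply Rle_trans with (1 := Ht); apply Rmin_r).
  apply Rmult_le_compat_l with (r := k) in Htk; [|lra].
  replace (k * (ln theta / k)) with (ln theta) in Htk by (field; lra). exact Htk.
Qed.

Lemma derivable_pt_lim_eq_val f x l l' :
  l = l' -> derivable_pt_lim f x l -> derivable_pt_lim f x l'.
Proof. now intros ->. Qed.

Lemma derivable_pt_lim_continuity_pt f x l :
  derivable_pt_lim f x l -> continuity_pt f x.
Proof. intros H. apply derivable_continuous_pt. now exists l. Qed.

Lemma derivable_pt_lim_exp_mul k x :
  derivable_pt_lim (fun t => exp (k * t)) x (k * exp (k * x)).
Proof.
  apply (derivable_pt_lim_eq_val _ _ (exp (k * x) * (0 * x + k * 1))); [ring|].
  apply (derivable_pt_lim_comp (fun t => k * t) exp); [|apply derivable_pt_lim_exp].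
  apply (derivable_pt_lim_mult (fun _ => k) id);
    [apply derivable_pt_lim_const|apply derivable_pt_lim_id].
Qed.

Lemma derivable_pt_lim_sqr f x l :
  derivable_pt_lim f x l -> derivable_pt_lim (fun y => f y ^ 2) x (2 * f x * l).
Proof.
  intros H. apply (derivable_pt_lim_eq_val _ _ (l * f x + f x * l)); [ring|].
  apply (derivable_pt_lim_locally_ext (fun y => f y * f y) _ x (x - 1) (x + 1)); [lra| |].
  - intros; ring.
  - now apply (derivable_pt_lim_mult f f).
Qed.

Lemma continuity_pt_ball f x : continuity_pt f x ->
  forall eps, 0 < eps ->
  exists d, 0 < d /\ forall y, Rabs (y - x) < d -> Rabs (f y - f x) < eps.
Proof.
  intros Hc eps Heps. destruct (Hc eps Heps) as [d [Hd Hdd]].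
  exists d. split; [exact Hd|]. intros y Hy.
  destruct (Req_dec y x) as [->|Hne].
  - rewrite Rminus_diag, Rabs_R0. exact Heps.
  - apply (Hdd y). split; [split; [exact I|auto]|exact Hy].
Qed.

Lemma continuity_pt_neq0_near f x : continuity_pt f x -> f x <> 0 ->
  exists d, 0 < d /\ forall y, Rabs (y - x) < d -> f y <> 0.
Proof.
  intros Hc Hx.
  destruct (continuity_pt_ball f x Hc (Rabs (f x)) (Rabs_pos_lt _ Hx)) as [d [Hd Hdd]].
  exists d. split; [exact Hd|]. intros y Hy Hfy.
  specialize (Hdd y Hy). rewrite Hfy, Rminus_0_l, Rabs_Ropp in Hdd. lra.
Qed.

Lemma derivable_pt_lim_neg_decreasing g y l :
  derivable_pt_lim g y l -> l < 0 ->
  exists d, 0 < d /\ forall h, 0 < h < d -> g (y + h) < g y < g (y - h).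
Proof.
  intros Hd Hl.
  destruct (Hd (- l / 2)) as [d Hdd]; [lra|].
  assert (Hq : forall h, h <> 0 -> Rabs h < d -> (g (y + h) - g y) / h < 0).
  { intros h Hh0 Hh. specialize (Hdd h Hh0 Hh). apply Rabs_def2 in Hdd. lra. }
  exists d. split; [apply cond_pos|]. intros h Hh.
  assert (Hr := Hq h ltac:(lra) ltac:(rewrite Rabs_right; lra)).
  assert (Hl' := Hq (- h) ltac:(lra) ltac:(rewrite Rabs_left; lra)).
  replace (y + - h) with (y - h) in Hl' by ring.
  assert (Er : g (y + h) - g y = (g (y + h) - g y) / h * h) by (field; lra).
  assert (El : g (y - h) - g y = (g (y - h) - g y) / - h * - h) by (field; lra).
  split; nra.
Qed.

Lemma IVT_sign f a b : a <= b -> (forall x, a <= x <= b -> continuity_pt f x) ->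
  f a * f b <= 0 -> exists z, a <= z <= b /\ f z = 0.
Proof.
  intros Hab Hc Hs.
  destruct (Req_dec (f a) 0) as [Ha|Ha]; [exists a; split; [lra|auto]|].
  destruct (Req_dec (f b) 0) as [Hb|Hb]; [exists b; split; [lra|auto]|].
  destruct (Rle_lt_or_eq_dec a b Hab) as [Hlt|<-]; [|nra].
  destruct (Rlt_or_le (f a) 0) as [Hn|Hp].
  - destruct (IVT_interv f a b Hc Hlt Hn ltac:(nra)) as [z Hz]. exists z; tauto.
  - destruct (IVT_interv (fun x => - f x) a b) as [z Hz]; [|exact Hlt|lra|nra|].
    + intros x Hx. apply continuity_pt_opp. auto.
    + exists z. split; [tauto|lra].
Qed.

Lemma last_zero_before_pos g a b : a <= b ->
  (forall x, a <= x <= b -> continuity_pt g x) -> g a <= 0 -> 0 < g b ->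
  exists y, a <= y < b /\ g y = 0 /\ forall x, y < x <= b -> 0 < g x.
Proof.
  intros Hab Hc Ha Hb.
  set (E := fun x => a <= x <= b /\ g x = 0).
  assert (HE : exists x, E x).
  { destruct (IVT_sign g a b Hab Hc ltac:(nra)) as [z Hz]. now exists z. }
  destruct (completeness E ltac:(exists b; intros x [Hx _]; lra) HE) as [y [Hub Hlub]].
  assert (Hay : a <= y) by (destruct HE as [z Hz]; specialize (Hub z Hz); unfold E in Hz; lra).
  assert (Hyb : y <= b) by (apply Hlub; intros x [Hx _]; lra).
  assert (Hgy : g y = 0).
  { destruct (Req_dec (g y) 0) as [|Hne]; [assumption|exfalso].
    destruct (continuity_pt_neq0_near g y (Hc y ltac:(lra)) Hne) as [d [Hd Hdd]].
    assert (y <= y - d / 2); [|lra].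
    apply Hlub. intros x Hx. specialize (Hub x Hx).
    destruct (Rle_or_lt x (y - d / 2)) as [|Hx']; [assumption|].
    exfalso. apply (Hdd x); [rewrite Rabs_left1; lra|apply Hx]. }
  exists y. split; [split; [assumption|]|split; [assumption|]].
  - destruct (Req_dec y b) as [->|]; lra.
  - intros x Hx. destruct (Rlt_or_le 0 (g x)) as [|Hle]; [assumption|exfalso].
    destruct (IVT_sign g x b ltac:(lra)) as [z [Hz Hgz]]; [intros; apply Hc; lra|nra|].
    assert (z <= y) by (apply Hub; split; [lra|exact Hgz]). lra.
Qed.

Lemma neg_of_downcrossing_zeros g g' x0 x1 : x0 < x1 ->
  (forall x, x0 <= x <= x1 -> derivable_pt_lim g x (g' x)) ->
  (forall x, x0 <= x <= x1 -> g x = 0 -> g' x < 0) ->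
  g x0 <= 0 -> g x1 < 0.
Proof.
  intros Hlt Hd Htr H0.
  assert (Hc : forall x, x0 <= x <= x1 -> continuity_pt g x)
    by (intros x Hx; exact (derivable_pt_lim_continuity_pt _ _ _ (Hd x Hx))).
  destruct (Rlt_or_le (g x1) 0) as [|H1]; [assumption|exfalso].
  assert (exists x1', x0 < x1' <= x1 /\ 0 < g x1') as [x1' [Hx1' Hg1']].
  { destruct (Rle_lt_or_eq_dec 0 (g x1) H1) as [Hp|Hz]; [exists x1; split; [lra|auto]|].
    destruct (derivable_pt_lim_neg_decreasing g x1 (g' x1) (Hd x1 ltac:(lra))
                (Htr x1 ltac:(lra) ltac:(auto))) as [d [Hd0 Hdd]].
    set (h := Rmin (d / 2) ((x1 - x0) / 2)).
    assert (Hh : 0 < h <= (x1 - x0) / 2) by (split; [apply Rmin_pos|apply Rmin_r]; lra).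
    assert (h < d) by (apply Rle_lt_trans with (d / 2); [apply Rmin_l|lra]).
    exists (x1 - h). split; [lra|]. destruct (Hdd h ltac:(lra)). lra. }
  destruct (last_zero_before_pos g x0 x1' ltac:(lra) ltac:(intros; apply Hc; lra) H0 Hg1')
    as [y [Hy [Hgy Hpos]]].
  destruct (derivable_pt_lim_neg_decreasing g y (g' y) (Hd y ltac:(lra))
              (Htr y ltac:(lra) Hgy)) as [d [Hd0 Hdd]].
  set (h := Rmin (d / 2) (x1' - y)).
  assert (Hh : 0 < h <= x1' - y) by (split; [apply Rmin_pos|apply Rmin_r]; lra).
  assert (h < d) by (apply Rle_lt_trans with (d / 2); [apply Rmin_l|lra]).
  destruct (Hdd h ltac:(lra)) as [Hneg _].
  specialize (Hpos (y + h) ltac:(lra)). lra.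
Qed.

Lemma nonvanishing_same_sign f a b :
  (forall x, a < x < b -> continuity_pt f x) -> (forall x, a < x < b -> f x <> 0) ->
  forall x y, a < x < b -> a < y < b -> 0 < f x * f y.
Proof.
  intros Hc Hz.
  assert (Hxy : forall x y, a < x < b -> a < y < b -> x <= y -> 0 < f x * f y).
  { intros x y Hx Hy Hle. destruct (Rlt_or_le 0 (f x * f y)) as [|Hneg]; [assumption|exfalso].
    destruct (IVT_sign f x y Hle) as [z [Hz1 Hz2]]; [intros; apply Hc; lra|exact Hneg|].
    exact (Hz z ltac:(lra) Hz2). }
  intros x y Hx Hy. destruct (Rle_or_lt x y); [auto|].
  rewrite Rmult_comm. apply Hxy; auto; lra.
Qed.

Lemma le_of_derivative_nonpos G G' a b : a <= b ->
  (forall x, a <= x <= b -> derivable_pt_lim G x (G' x)) ->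
  (forall x, a < x < b -> G' x <= 0) -> G b <= G a.
Proof.
  intros Hab Hd Hn.
  destruct (Rle_lt_or_eq_dec a b Hab) as [Hlt|<-]; [|lra].
  destruct (MVT_cor2 G G' a b Hlt Hd) as [c [Hc1 Hc2]].
  specialize (Hn c Hc2). nra.
Qed.

Lemma nl_0 p : nl p 0 = 0.
Proof. unfold nl. destruct (Req_EM_T 0 0); [reflexivity|lra]. Qed.

Lemma nl_neq0 p x : x <> 0 -> nl p x = Rpower (Rabs x) (p - 1) * x.
Proof. intros Hx. unfold nl. destruct (Req_EM_T x 0); [lra|reflexivity]. Qed.

Lemma nl_exp_mul p k x : nl p (exp k * x) = exp (p * k) * nl p x.
Proof.
  destruct (Req_dec x 0) as [->|Hx]; [rewrite Rmult_0_r, !nl_0; ring|].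
  assert (Hkx : exp k * x <> 0) by (apply Rmult_integral_contrapositive; split;
    [apply Rgt_not_eq, exp_pos|exact Hx]).
  rewrite !nl_neq0 by assumption.
  rewrite Rabs_mult, (Rabs_right (exp k)) by (left; apply exp_pos).
  rewrite <- Rpower_mult_distr by (try apply exp_pos; apply Rabs_pos_lt, Hx).
  unfold Rpower at 1. rewrite ln_exp.
  replace (p * k) with ((p - 1) * k + k) by ring. rewrite exp_plus. ring.
Qed.

Lemma Rabs_nl_le p x : 1 <= p -> Rabs x <= 1 -> Rabs (nl p x) <= Rabs x.
Proof.
  intros Hp Hx. destruct (Req_dec x 0) as [->|Hx0]; [rewrite nl_0; lra|].
  rewrite nl_neq0, Rabs_mult, (Rabs_right (Rpower _ _)) by (auto; left; apply Rpower_pos).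
  assert (Rpower (Rabs x) (p - 1) <= 1).
  { rewrite <- (Rpower_1_l (p - 1)) at 2.
    apply Rle_Rpower_l; [lra|split; [apply Rabs_pos_lt|]; auto]. }
  pose proof (Rabs_pos x). nra.
Qed.

Definition nl_prim (p x : R) : R := x * nl p x / (p + 1).

Lemma nl_prim_neq0 p x : 1 < p -> x <> 0 -> nl_prim p x = Rpower (Rabs x) (p + 1) / (p + 1).
Proof.
  intros Hp Hx. unfold nl_prim. rewrite nl_neq0 by assumption.
  replace (p + 1) with ((p - 1) + INR 2) at 2 by (simpl; ring).
  rewrite Rpower_plus, Rpower_pow by (apply Rabs_pos_lt, Hx).
  replace (Rabs x ^ 2) with (x * x) by (simpl; rewrite Rmult_1_r, <- Rabs_mult;
    symmetry; apply Rabs_right; nra).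
  field. lra.
Qed.

Lemma nl_prim_ge0 p x : 1 < p -> 0 <= nl_prim p x.
Proof.
  intros Hp. destruct (Req_dec x 0) as [->|Hx].
  - unfold nl_prim. rewrite nl_0. unfold Rdiv. rewrite !Rmult_0_l. lra.
  - rewrite nl_prim_neq0 by assumption.
    apply Rlt_le, Rdiv_lt_0_compat; [apply Rpower_pos|lra].
Qed.

Lemma nl_prim_le_sqr p x : 1 < p -> Rabs x <= 1 -> nl_prim p x <= x ^ 2.
Proof.
  intros Hp Hx. unfold nl_prim.
  assert (Hnl := Rabs_nl_le p x ltac:(lra) Hx).
  assert (x * nl p x <= x ^ 2).
  { apply Rle_trans with (Rabs (x * nl p x)); [apply Rle_abs|].
    rewrite Rabs_mult. replace (x ^ 2) with (Rabs x * Rabs x)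
      by (simpl; rewrite Rmult_1_r, <- Rabs_mult; apply Rabs_right; nra).
    apply Rmult_le_compat_l; [apply Rabs_pos|exact Hnl]. }
  apply Rle_trans with (x ^ 2 / (p + 1)).
  - unfold Rdiv. apply Rmult_le_compat_r; [left; apply Rinv_0_lt_compat; lra|assumption].
  - apply Rmult_le_reg_r with (p + 1); [lra|].
    unfold Rdiv. rewrite Rmult_assoc, Rinv_l by lra. nra.
Qed.

Lemma nl_prim_derive_0 p : 1 < p -> derivable_pt_lim (nl_prim p) 0 0.
Proof.
  intros Hp eps Heps.
  exists (mkposreal _ (Rmin_pos 1 eps ltac:(lra) Heps)). simpl. intros h Hh Hlt.
  unfold nl_prim. rewrite nl_0, Rplus_0_l.
  replace ((h * nl p h / (p + 1) - 0 * 0 / (p + 1)) / h - 0) with (nl p h * / (p + 1))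
    by (field; lra).
  assert (Rabs h <= 1) by (left; eapply Rlt_le_trans; [exact Hlt|apply Rmin_l]).
  assert (Rabs h < eps) by (eapply Rlt_le_trans; [exact Hlt|apply Rmin_r]).
  assert (Rabs (nl p h) <= Rabs h) by (apply Rabs_nl_le; lra).
  rewrite Rabs_mult, (Rabs_right (/ (p + 1))) by (left; apply Rinv_0_lt_compat; lra).
  assert (/ (p + 1) < 1) by (rewrite <- Rinv_1; apply Rinv_lt_contravar; lra).
  assert (0 < / (p + 1)) by (apply Rinv_0_lt_compat; lra).
  pose proof (Rabs_pos (nl p h)). nra.
Qed.

Lemma nl_prim_derive p x : 1 < p -> derivable_pt_lim (nl_prim p) x (nl p x).
Proof.
  intros Hp.
  assert (Hpow : forall y, 0 < y -> Rpower y (p + 1 - 1) = Rpower y (p - 1) * y).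
  { intros y Hy. rewrite <- (Rpower_1 y) at 3 by exact Hy. rewrite <- Rpower_plus.
    f_equal. ring. }
  destruct (Rtotal_order x 0) as [Hx|[->|Hx]].
  - apply (derivable_pt_lim_locally_ext (fun y => / (p + 1) * Rpower (- y) (p + 1))
             _ x (2 * x) 0); [lra| |].
    + intros z Hz. rewrite nl_prim_neq0, Rabs_left by lra. field. lra.
    + rewrite nl_neq0, Rabs_left by lra.
      apply (derivable_pt_lim_eq_val _ _
               (/ (p + 1) * ((p + 1) * Rpower (- x) (p + 1 - 1) * - 1))).
      { rewrite Hpow by lra. field. lra. }
      apply (derivable_pt_lim_scal (fun y => Rpower (- y) (p + 1))).
      apply (derivable_pt_lim_comp Ropp (fun y => Rpower y (p + 1))).
      * apply (derivable_pt_lim_opp id), derivable_pt_lim_id.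
      * apply derivable_pt_lim_power. lra.
  - rewrite nl_0. now apply nl_prim_derive_0.
  - apply (derivable_pt_lim_locally_ext (fun y => / (p + 1) * Rpower y (p + 1))
             _ x 0 (2 * x)); [lra| |].
    + intros z Hz. rewrite nl_prim_neq0, Rabs_right by lra. field. lra.
    + rewrite nl_neq0, Rabs_right by lra.
      apply (derivable_pt_lim_eq_val _ _ (/ (p + 1) * ((p + 1) * Rpower x (p + 1 - 1)))).
      { rewrite Hpow by lra. field. lra. }
      apply (derivable_pt_lim_scal (fun y => Rpower y (p + 1))).
      apply derivable_pt_lim_power. lra.
Qed.

Lemma energy_scaled_le p b E y z U Z : 1 < p -> 0 < E -> 0 < y < U -> 0 < z < Z ->
  E ^ 2 * U ^ 2 <= 1 ->
  Rabs ((E * z) ^ 2 / 2 - b * (E * y) ^ 2 / 2 + nl_prim p (E * y))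
    <= E ^ 2 * (Z ^ 2 / 2 + Rabs b * U ^ 2 / 2 + U ^ 2).
Proof.
  intros Hp HE Hy Hz HEU.
  assert (Hy2 : y ^ 2 <= U ^ 2) by nra. assert (Hz2 : z ^ 2 <= Z ^ 2) by nra.
  assert (HV : Rabs (E * y) <= 1).
  { rewrite Rabs_right by nra.
    assert ((E * y) ^ 2 <= 1) by (replace ((E * y) ^ 2) with (E ^ 2 * y ^ 2) by ring; nra).
    nra. }
  pose proof (nl_prim_ge0 p (E * y) Hp). pose proof (nl_prim_le_sqr p (E * y) Hp HV).
  pose proof (Rle_abs b). pose proof (Rle_abs (- b)). rewrite Rabs_Ropp in *.
  assert (Hb : Rabs b * y ^ 2 <= Rabs b * U ^ 2) by (apply Rmult_le_compat_l; [apply Rabs_pos|lra]).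
  apply Rabs_le. split; nra.
Qed.

Lemma rest_point_transversal p b V : 1 < p -> 0 <= b ->
  b * V ^ 2 / 2 < nl_prim p V -> V * (b * V - nl p V) < 0.
Proof.
  intros Hp Hb HF.
  destruct (Req_dec V 0) as [->|HV]; [unfold nl_prim in HF; rewrite nl_0 in HF; lra|].
  unfold nl_prim in HF. rewrite nl_neq0 in * by exact HV.
  set (Y := Rpower (Rabs V) (p - 1)) in *.
  assert (HVV : 0 < V * V) by (destruct (Rlt_or_le 0 V); [|assert (V < 0) by lra]; nra).
  assert (HbY : b * (p + 1) < 2 * Y).
  { apply Rmult_lt_reg_r with (V * V / (p + 1)); [apply Rdiv_lt_0_compat; lra|].
    replace (b * (p + 1) * (V * V / (p + 1))) with (2 * (b * V ^ 2 / 2)) by (field; lra).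
    replace (2 * Y * (V * V / (p + 1))) with (2 * (V * (Y * V) / (p + 1))) by (field; lra).
    lra. }
  replace (V * (b * V - Y * V)) with ((b - Y) * (V * V)) by ring.
  assert (b < Y) by nra. nra.
Qed.

(** * The Emden-Fowler transformation *)

(* In the notation of the header, [ef_v] is v, [ef_w] is v', [ef_rhs] is v'' and
   [ef_energy] is H. *)
Definition ef_c (p : R) : R := 2 / (p - 1).
Definition ef_v (p : R) (u : R -> R) (t : R) : R := exp (ef_c p * t) * u (exp t).
Definition ef_w (p : R) (u u1 : R -> R) (t : R) : R :=
  exp (ef_c p * t) * (ef_c p * u (exp t) + exp t * u1 (exp t)).
Definition ef_b (N : nat) (p : R) : R := ef_c p * (INR N - 2 - ef_c p).
Definition ef_A (N : nat) (p : R) : R := 2 * ef_c p + 2 - INR N.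
Definition ef_rhs (N : nat) (p : R) (u u1 : R -> R) (t : R) : R :=
  ef_A N p * ef_w p u u1 t + ef_b N p * ef_v p u t - nl p (ef_v p u t).
Definition ef_energy (N : nat) (p : R) (u u1 : R -> R) (t : R) : R :=
  ef_w p u u1 t ^ 2 / 2 - ef_b N p * ef_v p u t ^ 2 / 2 + nl_prim p (ef_v p u t).

Lemma ef_c_pos p : 1 < p -> 0 < ef_c p.
Proof. intros; apply Rdiv_lt_0_compat; lra. Qed.

Lemma exp_neg_lt_1 t : t < 0 -> 0 < exp t < 1.
Proof. intros. split; [apply exp_pos|]. rewrite <- exp_0. now apply exp_increasing. Qed.

Section Emden_Fowler.
Variables (N : nat) (p : R) (u u1 u2 : R -> R).
Hypothesis Hp : 1 < p.
Hypothesis Hsol : radial_sol N p u u1 u2.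
Hypothesis Hu0 : 0 < u 0.

Local Notation v := (ef_v p u).
Local Notation w := (ef_w p u u1).
Local Notation energy := (ef_energy N p u u1).

Lemma ef_v_derive t : t < 0 -> derivable_pt_lim v t (w t).
Proof.
  intros Ht. destruct Hsol as [_ [Hd1 _]]. pose proof (exp_neg_lt_1 t Ht).
  unfold ef_v, ef_w.
  apply (derivable_pt_lim_eq_val _ _ (ef_c p * exp (ef_c p * t) * u (exp t)
           + exp (ef_c p * t) * (u1 (exp t) * exp t))); [ring|].
  apply (derivable_pt_lim_mult (fun t => exp (ef_c p * t)) (fun t => u (exp t))).
  - apply derivable_pt_lim_exp_mul.
  - apply (derivable_pt_lim_comp exp u); [apply derivable_pt_lim_exp|apply Hd1; lra].
Qed.

Lemma ef_w_derive t : t < 0 -> derivable_pt_lim w t (ef_rhs N p u u1 t).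
Proof.
  intros Ht. destruct Hsol as [_ [Hd1 [Hd2 [_ [Hode _]]]]].
  set (E := exp (ef_c p * t)). set (r := exp t).
  assert (He : 0 < r < 1) by (apply exp_neg_lt_1, Ht).
  assert (Hu2 : u2 r = - ((INR N - 1) / r * u1 r) - nl p (u r)) by (pose proof (Hode r He); lra).
  assert (Hnl : nl p (v t) = E * (r * r) * nl p (u r)).
  { unfold ef_v. rewrite nl_exp_mul. unfold E, r. rewrite <- !exp_plus. do 2 f_equal.
    unfold ef_c. field. lra. }
  apply (derivable_pt_lim_eq_val _ _ (ef_c p * E * (ef_c p * u r + r * u1 r)
           + E * (ef_c p * (u1 r * r) + (r * u1 r + r * (u2 r * r))))).
  { unfold ef_rhs, ef_A, ef_b. rewrite Hnl, Hu2. unfold ef_w, ef_v. fold E r. field. lra. }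
  apply (derivable_pt_lim_mult (fun t => exp (ef_c p * t))
           (fun t => ef_c p * u (exp t) + exp t * u1 (exp t)));
    [apply derivable_pt_lim_exp_mul|].
  apply (derivable_pt_lim_plus (fun t => ef_c p * u (exp t)) (fun t => exp t * u1 (exp t))).
  - apply (derivable_pt_lim_scal (fun t => u (exp t))).
    apply (derivable_pt_lim_comp exp u); [apply derivable_pt_lim_exp|apply Hd1; lra].
  - apply (derivable_pt_lim_mult exp (fun t => u1 (exp t))); [apply derivable_pt_lim_exp|].
    apply (derivable_pt_lim_comp exp u1); [apply derivable_pt_lim_exp|apply Hd2; lra].
Qed.

Lemma ef_energy_derive t : t < 0 -> derivable_pt_lim energy t (ef_A N p * w t ^ 2).
Proof.
  intros Ht. unfold ef_energy.
  pose proof (ef_v_derive t Ht) as Dv. pose proof (ef_w_derive t Ht) as Dw.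
  apply (derivable_pt_lim_eq_val _ _
    (2 * w t * ef_rhs N p u u1 t * / 2 - ef_b N p * (2 * v t * w t) * / 2 + nl p (v t) * w t)).
  { unfold ef_rhs. field. }
  apply (derivable_pt_lim_plus (fun t => w t ^ 2 / 2 - ef_b N p * v t ^ 2 / 2)).
  - apply (derivable_pt_lim_minus (fun t => w t ^ 2 / 2) (fun t => ef_b N p * v t ^ 2 / 2)).
    + apply (derivable_pt_lim_eq_val _ _ (2 * w t * ef_rhs N p u u1 t * / 2 + w t ^ 2 * 0));
        [ring|].
      apply (derivable_pt_lim_mult (fun t => w t ^ 2) (fun _ => / 2));
        [now apply derivable_pt_lim_sqr|apply derivable_pt_lim_const].
    + apply (derivable_pt_lim_eq_val _ _
               (ef_b N p * (2 * v t * w t) * / 2 + ef_b N p * v t ^ 2 * 0)); [ring|].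
      apply (derivable_pt_lim_mult (fun t => ef_b N p * v t ^ 2) (fun _ => / 2));
        [|apply derivable_pt_lim_const].
      apply (derivable_pt_lim_scal (fun t => v t ^ 2)). now apply derivable_pt_lim_sqr.
  - apply (derivable_pt_lim_comp v (nl_prim p)); [exact Dv|now apply nl_prim_derive].
Qed.

Lemma ef_profile_near_origin : exists rho U Z, 0 < rho <= 1 /\
  forall r, 0 < r < rho -> 0 < u r < U /\ 0 < ef_c p * u r + r * u1 r < Z.
Proof.
  destruct Hsol as [_ [Hd1 [Hd2 _]]].
  set (c := ef_c p). assert (Hc : 0 < c) by (apply ef_c_pos, Hp).
  destruct (continuity_pt_ball u 0 (derivable_pt_lim_continuity_pt _ _ _ (Hd1 0 ltac:(lra)))
              (u 0 / 2) ltac:(lra)) as [d1 [Hd1p Hu]].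
  destruct (continuity_pt_ball u1 0 (derivable_pt_lim_continuity_pt _ _ _ (Hd2 0 ltac:(lra)))
              1 ltac:(lra)) as [d2 [Hd2p Hu1]].
  set (L := Rabs (u1 0) + 1).
  assert (HL : 0 < L) by (unfold L; pose proof (Rabs_pos (u1 0)); lra).
  set (rho := Rmin (Rmin d1 d2) (Rmin 1 (c * u 0 / (4 * L)))).
  assert (Hrho : 0 < rho) by (repeat apply Rmin_pos; try lra; apply Rdiv_lt_0_compat; nra).
  exists rho, (3 * u 0 / 2), (c * (3 * u 0 / 2) + L).
  split; [split; [exact Hrho|apply Rle_trans with (Rmin 1 (c * u 0 / (4 * L)));
    [apply Rmin_r|apply Rmin_l]]|].
  intros r [Hr0 Hr].
  destruct (proj1 (Rmin_Rgt _ _ _) Hr) as [Hr12 Hr34].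
  destruct (proj1 (Rmin_Rgt _ _ _) Hr12) as [Hrd1 Hrd2].
  destruct (proj1 (Rmin_Rgt _ _ _) Hr34) as [Hr1 Hr4].
  assert (Hur := Hu r ltac:(rewrite Rminus_0_r, Rabs_right; lra)).
  assert (Hu1r := Hu1 r ltac:(rewrite Rminus_0_r, Rabs_right; lra)).
  apply Rabs_def2 in Hur. apply Rabs_def2 in Hu1r.
  pose proof (Rle_abs (u1 0)). pose proof (Rle_abs (- u1 0)). rewrite Rabs_Ropp in *.
  assert (HrL : r * L < c * u 0 / 4).
  { apply Rmult_lt_reg_r with (/ L); [apply Rinv_0_lt_compat, HL|].
    replace (c * u 0 / 4 * / L) with (c * u 0 / (4 * L)) by (field; lra).
    rewrite Rmult_assoc, Rinv_r, Rmult_1_r by lra. exact Hr4. }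
  assert (- L <= u1 r <= L) by (unfold L; lra).
  assert (- (r * L) <= r * u1 r <= r * L) by (split; nra).
  split; split; nra.
Qed.

Lemma ef_near_minus_infty eta T : 0 < eta -> exists tau, tau < T /\
  forall t, t <= tau -> 0 < v t /\ 0 < w t /\ Rabs (energy t) <= eta.
Proof.
  intros Heta.
  destruct ef_profile_near_origin as [rho [U [Z [[Hrho Hrho1] Hprof]]]].
  set (c := ef_c p). assert (Hc : 0 < c) by (apply ef_c_pos, Hp).
  assert (HU : 0 < U) by (destruct (Hprof (rho / 2) ltac:(lra)); lra).
  set (K := Z ^ 2 / 2 + Rabs (ef_b N p) * U ^ 2 / 2 + U ^ 2).
  assert (HK : 0 <= K) by (unfold K; pose proof (Rabs_pos (ef_b N p)); nra).
  set (theta := Rmin (eta / (K + 1)) (/ U ^ 2)).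
  assert (Hth : 0 < theta)
    by (apply Rmin_pos; [apply Rdiv_lt_0_compat|apply Rinv_0_lt_compat]; nra).
  assert (HthK : theta * K <= eta).
  { apply Rle_trans with (eta / (K + 1) * K); [apply Rmult_le_compat_r; [lra|apply Rmin_l]|].
    apply Rmult_le_reg_r with (K + 1); [lra|]. field_simplify; nra. }
  assert (HthU : theta * U ^ 2 <= 1).
  { apply Rle_trans with (/ U ^ 2 * U ^ 2);
      [apply Rmult_le_compat_r; [nra|apply Rmin_r]|right; field; lra]. }
  destruct (exp_mul_eventually_le 1 (rho / 2) T ltac:(lra) ltac:(lra)) as [tau1 [Htau1 Hr]].
  destruct (exp_mul_eventually_le (2 * c) theta T ltac:(lra) Hth) as [tau2 [Htau2 HE]].
  exists (Rmin tau1 tau2). split; [apply Rle_lt_trans with tau1; [apply Rmin_l|exact Htau1]|].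
  intros t Ht.
  specialize (Hr t ltac:(apply Rle_trans with (1 := Ht), Rmin_l)). rewrite Rmult_1_l in Hr.
  specialize (HE t ltac:(apply Rle_trans with (1 := Ht), Rmin_r)).
  replace (exp (2 * c * t)) with (exp (c * t) ^ 2) in HE
    by (simpl; rewrite Rmult_1_r, <- exp_plus; f_equal; ring).
  destruct (Hprof (exp t) ltac:(split; [apply exp_pos|lra])) as [Hu Hz]. fold c in Hz.
  assert (HE0 : 0 < exp (c * t)) by apply exp_pos.
  unfold ef_energy, ef_v, ef_w. fold c.
  split; [apply Rmult_lt_0_compat; lra|split; [apply Rmult_lt_0_compat; lra|]].
  eapply Rle_trans; [apply energy_scaled_le; eauto; nra|].
  apply Rle_trans with (theta * K); [|exact HthK].
  apply Rmult_le_compat_r; [exact HK|exact HE].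
Qed.

Lemma ef_energy_mono t1 t2 : 0 <= ef_A N p -> t1 <= t2 < 0 -> energy t1 <= energy t2.
Proof.
  intros HA Ht.
  enough (- energy t2 <= - energy t1) by lra.
  apply (le_of_derivative_nonpos (fun t => - energy t) (fun t => - (ef_A N p * w t ^ 2)) t1 t2);
    [lra| |].
  - intros x Hx. apply derivable_pt_lim_opp. apply ef_energy_derive. lra.
  - intros x _. pose proof (pow2_ge_0 (w x)). nra.
Qed.

Lemma ef_energy_ge0 t : 0 <= ef_A N p -> t < 0 -> 0 <= energy t.
Proof.
  intros HA Ht. destruct (Rle_or_lt 0 (energy t)) as [|Hneg]; [assumption|exfalso].
  destruct (ef_near_minus_infty (- energy t / 2) t ltac:(lra)) as [tau [Htau Hnear]].
  destruct (Hnear tau ltac:(lra)) as [_ [_ Habs]].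
  pose proof (Rle_abs (- energy tau)) as Habs'. rewrite Rabs_Ropp in Habs'.
  pose proof (ef_energy_mono tau t HA ltac:(lra)). lra.
Qed.

Lemma ef_energy_pos t : 0 < ef_A N p -> t < 0 -> 0 < energy t.
Proof.
  intros HA Ht.
  destruct (ef_near_minus_infty 1 t ltac:(lra)) as [tau [Htau Hnear]].
  destruct (MVT_cor2 energy (fun t => ef_A N p * w t ^ 2) (tau - 1) tau ltac:(lra))
    as [xi [Hxi1 Hxi2]].
  { intros x Hx. apply ef_energy_derive. lra. }
  destruct (Hnear xi ltac:(lra)) as [_ [Hw _]].
  pose proof (ef_energy_ge0 (tau - 1) ltac:(lra) ltac:(lra)).
  pose proof (ef_energy_mono tau t ltac:(lra) ltac:(lra)).
  assert (0 < ef_A N p * w xi ^ 2) by (apply Rmult_lt_0_compat; nra).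
  nra.
Qed.

Lemma ef_w_zero_transversal : 0 < ef_A N p -> 0 <= ef_b N p ->
  forall t, t < 0 -> w t = 0 -> v t * ef_rhs N p u u1 t < 0.
Proof.
  intros HA Hb t Ht Hw.
  pose proof (ef_energy_pos t HA Ht) as HH. unfold ef_energy in HH. unfold ef_rhs.
  rewrite Hw in *. rewrite Rmult_0_r, Rplus_0_l.
  apply rest_point_transversal; [exact Hp|exact Hb|]. simpl in HH |- *. lra.
Qed.

End Emden_Fowler.

(** * Energy growth along an oscillation *)

Lemma Rabs_sign k : k = 1 \/ k = -1 -> Rabs k = 1.
Proof. intros [-> | ->]; [apply Rabs_R1|rewrite Rabs_left; lra]. Qed.

Section Oscillation.
Variables (v w w' H : R -> R) (A : R).
Hypothesis v_derive : forall t, t < 0 -> derivable_pt_lim v t (w t).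
Hypothesis w_derive : forall t, t < 0 -> derivable_pt_lim w t (w' t).
Hypothesis H_derive : forall t, t < 0 -> derivable_pt_lim H t (A * w t ^ 2).
Hypothesis A_ge0 : 0 <= A.
Hypothesis w_zero_transversal : forall t, t < 0 -> w t = 0 -> v t * w' t < 0.

(* While k w >= 0, H' = A w^2 <= A K2 (k v)', so H grows by at most A K2 |v b - v a|. *)
Lemma energy_gain_monotone_piece K1 K2 k a b : a <= b -> b < 0 -> (k = 1 \/ k = -1) ->
  (forall t, a < t < b -> 0 <= k * w t) ->
  (forall t, a <= t <= b -> Rabs (v t) <= K1 /\ Rabs (w t) <= K2) ->
  H b - H a <= 2 * A * K1 * K2.
Proof.
  intros Hab Hb Hk Hsign Hbd.
  assert (Hkk : k * k = 1) by (destruct Hk as [-> | ->]; ring).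
  assert (HG : H b - A * K2 * k * v b <= H a - A * K2 * k * v a).
  { apply (le_of_derivative_nonpos (fun t => H t - A * K2 * k * v t)
             (fun t => A * w t ^ 2 - A * K2 * k * w t) a b Hab).
    - intros x Hx. apply (derivable_pt_lim_minus H (fun t => A * K2 * k * v t));
        [apply H_derive; lra|].
      apply (derivable_pt_lim_scal v (A * K2 * k)). apply v_derive; lra.
    - intros x Hx. specialize (Hsign x Hx). destruct (Hbd x ltac:(lra)) as [_ Hw].
      assert (k * w x <= K2).
      { apply Rle_trans with (Rabs (k * w x)); [apply Rle_abs|].
        now rewrite Rabs_mult, Rabs_sign, Rmult_1_l. }
      replace (A * w x ^ 2 - A * K2 * k * w x) with (A * (k * w x) * (k * w x - K2))
        by (replace (w x ^ 2) with (k * k * (w x * w x)) by (rewrite Hkk; ring); ring).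
      assert (0 <= A * (k * w x)) by (apply Rmult_le_pos; lra). nra. }
  destruct (Hbd a ltac:(lra)) as [Hva Hwa]. destruct (Hbd b ltac:(lra)) as [Hvb _].
  assert (0 <= K2) by (pose proof (Rabs_pos (w a)); lra).
  assert (Hkv : k * (v b - v a) <= 2 * K1).
  { apply Rle_trans with (Rabs (k * (v b - v a))); [apply Rle_abs|].
    rewrite Rabs_mult, Rabs_sign by exact Hk.
    pose proof (Rabs_triang (v b) (- v a)). rewrite Rabs_Ropp in *. unfold Rminus. lra. }
  assert (A * K2 * (k * (v b - v a)) <= A * K2 * (2 * K1))
    by (apply Rmult_le_compat_l; [apply Rmult_le_pos|]; lra).
  nra.
Qed.

Lemma scaled_w_stays_neg s a b : a < b -> b < 0 ->
  (forall t, a <= t <= b -> 0 < s * v t) -> s * w a <= 0 -> s * w b < 0.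
Proof.
  intros Hab Hb Hsv Ha.
  apply (neg_of_downcrossing_zeros (fun t => s * w t) (fun t => s * w' t) a b Hab);
    [| |exact Ha].
  - intros x Hx. apply (derivable_pt_lim_scal w s). apply w_derive; lra.
  - intros x Hx Hz. specialize (Hsv x Hx).
    assert (Hs : s <> 0) by (intros ->; lra).
    assert (Hw : w x = 0) by (apply (Rmult_eq_reg_l s); [lra|exact Hs]).
    specialize (w_zero_transversal x ltac:(lra) Hw).
    assert (0 < (s * v x) * (s * v x)) by nra. nra.
Qed.

Lemma scaled_w_neg_at_zero s X Z0 : X < Z0 -> Z0 < 0 ->
  (forall t, X <= t < Z0 -> 0 < s * v t) -> v Z0 = 0 -> s * w Z0 < 0.
Proof.
  intros HXZ HZ Hreg Hv0.
  assert (Hw0 : w Z0 <> 0).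
  { intros Hw. specialize (w_zero_transversal Z0 HZ Hw). rewrite Hv0 in *. lra. }
  destruct (Rlt_or_le (s * w Z0) 0) as [|Hle]; [assumption|exfalso].
  assert (Hs : s <> 0) by (intros ->; specialize (Hreg X ltac:(lra)); lra).
  assert (Hpos : 0 < s * w Z0).
  { destruct Hle as [|Heq]; [assumption|]. exfalso. apply Hw0.
    apply (Rmult_eq_reg_l s); [lra|exact Hs]. }
  destruct (derivable_pt_lim_neg_decreasing (fun t => - s * v t) Z0 (- s * w Z0)
              (derivable_pt_lim_scal v (- s) Z0 _ (v_derive Z0 HZ)) ltac:(lra))
    as [d [Hd Hdd]].
  set (h := Rmin (d / 2) (Z0 - X)).
  assert (Hh : 0 < h <= Z0 - X) by (split; [apply Rmin_pos|apply Rmin_r]; lra).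
  assert (h < d) by (apply Rle_lt_trans with (d / 2); [apply Rmin_l|lra]).
  destruct (Hdd h ltac:(lra)) as [_ Hlt]. rewrite Hv0 in Hlt.
  specialize (Hreg (Z0 - h) ltac:(lra)). lra.
Qed.

Lemma w_sign_pattern s s' X Z0 S : X < Z0 -> Z0 < S -> S < 0 ->
  (forall t, X <= t < Z0 -> 0 < s * v t) -> (forall t, Z0 < t <= S -> 0 < s' * v t) ->
  v Z0 = 0 -> 0 < s * w X -> 0 < s' * w S ->
  exists z, X < z < Z0 /\ (forall t, X < t < z -> 0 <= s * w t) /\
    (forall t, z < t < Z0 -> 0 <= - s * w t) /\ (forall t, Z0 < t < S -> 0 <= s' * w t).
Proof.
  intros HXZ HZS HS Hreg Hreg' Hv0 HwX HwS.
  assert (Hcont : forall x, x < 0 -> continuity_pt (fun t => s * w t) x).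
  { intros x Hx. apply continuity_pt_scal.
    exact (derivable_pt_lim_continuity_pt _ _ _ (w_derive x Hx)). }
  pose proof (scaled_w_neg_at_zero s X Z0 HXZ ltac:(lra) Hreg Hv0) as HwZ.
  destruct (IVT_sign (fun t => s * w t) X Z0 ltac:(lra)) as [z [Hz Hgz]];
    [intros; apply Hcont; lra|simpl; nra|].
  simpl in Hgz.
  assert (HzX : X <> z) by (intros <-; lra). assert (HzZ : z <> Z0) by (intros ->; lra).
  exists z. split; [lra|]. split; [|split].
  - intros t Ht. destruct (Rle_or_lt 0 (s * w t)) as [|Hneg]; [assumption|exfalso].
    destruct (IVT_sign (fun t => s * w t) X t ltac:(lra)) as [t2 [Ht2 Hgt2]];
      [intros; apply Hcont; lra|simpl; nra|].
    simpl in Hgt2. assert (t2 <> X) by (intros ->; lra).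
    assert (s * w z < 0); [|lra].
    apply (scaled_w_stays_neg s t2 z); try lra. intros; apply Hreg; lra.
  - intros t Ht. assert (s * w t < 0); [|lra].
    apply (scaled_w_stays_neg s z t); try lra. intros; apply Hreg; lra.
  - intros t Ht. destruct (Rle_or_lt 0 (s' * w t)) as [|Hneg]; [assumption|exfalso].
    assert (s' * w S < 0); [|lra].
    apply (scaled_w_stays_neg s' t S); try lra. intros; apply Hreg'; lra.
Qed.

Lemma energy_gain_nodal_step K1 K2 s s' X Z0 S Y :
  X < Z0 -> Z0 < S -> S < 0 -> (s = 1 \/ s = -1) -> (s' = 1 \/ s' = -1) ->
  (forall t, X <= t < Z0 -> 0 < s * v t) -> (forall t, Z0 < t <= S -> 0 < s' * v t) ->
  v Z0 = 0 -> 0 < s * w X -> 0 < s' * w S -> X <= Y <= S ->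
  (forall t, X <= t <= Y -> Rabs (v t) <= K1 /\ Rabs (w t) <= K2) ->
  H Y <= H X + 3 * (2 * A * K1 * K2).
Proof.
  intros HXZ HZS HS Hs Hs' Hreg Hreg' Hv0 HwX HwS HY Hbd.
  destruct (w_sign_pattern s s' X Z0 S) as [z [Hz [P1 [P2 P3]]]]; auto.
  assert (Hms : - s = 1 \/ - s = -1) by (destruct Hs as [-> | ->]; [right|left]; ring).
  assert (HD : 0 <= 2 * A * K1 * K2).
  { destruct (Hbd X ltac:(lra)) as [Hv Hw].
    pose proof (Rabs_pos (v X)). pose proof (Rabs_pos (w X)).
    assert (0 <= A * K1) by (apply Rmult_le_pos; lra).
    assert (0 <= A * K1 * K2) by (apply Rmult_le_pos; lra). lra. }
  assert (Piece : forall k a b, X <= a <= b -> b <= Y -> (k = 1 \/ k = -1) ->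
            (forall t, a < t < b -> 0 <= k * w t) -> H b - H a <= 2 * A * K1 * K2).
  { intros k a b Hab HbY Hk Hsign.
    apply (energy_gain_monotone_piece K1 K2 k a b); try lra; auto.
    intros t Ht; apply Hbd; lra. }
  destruct (Rle_or_lt Y z) as [HYz|HYz].
  - assert (H Y - H X <= 2 * A * K1 * K2); [|lra].
    apply (Piece s); auto; try lra. intros t Ht; apply P1; lra.
  - assert (H z - H X <= 2 * A * K1 * K2) by (apply (Piece s); auto; lra).
    destruct (Rle_or_lt Y Z0) as [HYZ|HYZ].
    + assert (H Y - H z <= 2 * A * K1 * K2); [|lra].
      apply (Piece (- s)); auto; try lra. intros t Ht; apply P2; lra.
    + assert (H Z0 - H z <= 2 * A * K1 * K2) by (apply (Piece (- s)); auto; lra).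
      assert (H Y - H Z0 <= 2 * A * K1 * K2); [|lra].
      apply (Piece s'); auto; try lra. intros t Ht; apply P3; lra.
Qed.

End Oscillation.

(** * A priori bounds below energy level 1 *)

(* Above vbound, |V|^(p-1) exceeds (p+1)(1 + B0/2), so the potential term alone makes
   the energy larger than V^2 > 1. *)
Definition vbound (P1 B0 d : R) : R := Rpower (P1 * (1 + B0 / 2)) (/ d).
Definition wbound (P1 B0 d : R) : R := 2 + B0 * vbound P1 B0 d ^ 2.

Lemma vbound_ge1 P1 B0 d : 1 <= P1 -> 0 <= B0 -> 0 < d -> 1 <= vbound P1 B0 d.
Proof.
  intros HP HB Hd. unfold vbound. rewrite <- (Rpower_O (P1 * (1 + B0 / 2))) at 1 by nra.
  apply Rle_Rpower; [nra|apply Rlt_le, Rinv_0_lt_compat, Hd].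
Qed.

Lemma wbound_pos P1 B0 d : 0 <= B0 -> 0 < wbound P1 B0 d.
Proof.
  intros HB. unfold wbound.
  assert (0 <= B0 * vbound P1 B0 d ^ 2) by (apply Rmult_le_pos; [lra|apply pow2_ge_0]). lra.
Qed.

Lemma vbound_pow P1 B0 d : 0 < P1 -> 0 <= B0 -> 0 < d ->
  Rpower (vbound P1 B0 d) d = P1 * (1 + B0 / 2).
Proof.
  intros HP HB Hd. unfold vbound.
  rewrite Rpower_mult, Rinv_l, Rpower_1 by (try apply Rgt_not_eq; nra). reflexivity.
Qed.

Lemma energy_le_1_vbound p b P1 B0 d V W : 1 < p -> 0 < d <= p - 1 -> p + 1 <= P1 ->
  0 <= b <= B0 -> W ^ 2 / 2 - b * V ^ 2 / 2 + nl_prim p V <= 1 -> Rabs V <= vbound P1 B0 d.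
Proof.
  intros Hp Hd HP1 Hb HE.
  assert (HK1 := vbound_ge1 P1 B0 d ltac:(lra) ltac:(lra) ltac:(lra)).
  destruct (Rle_or_lt (Rabs V) (vbound P1 B0 d)) as [|Hgt]; [assumption|exfalso].
  assert (HV0 : V <> 0) by (intros ->; rewrite Rabs_R0 in Hgt; lra).
  assert (HVV : 1 < V * V).
  { rewrite <- (Rabs_right (V * V)) by nra. rewrite Rabs_mult. nra. }
  assert (HY : (p + 1) * (1 + B0 / 2) < Rpower (Rabs V) (p - 1)).
  { apply Rle_lt_trans with (P1 * (1 + B0 / 2)); [apply Rmult_le_compat_r; lra|].
    rewrite <- (vbound_pow P1 B0 d) by lra.
    apply Rlt_le_trans with (Rpower (Rabs V) d); [apply Rlt_Rpower_l; lra|].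
    apply Rle_Rpower; lra. }
  unfold nl_prim in HE. rewrite nl_neq0 in HE by exact HV0.
  set (Y := Rpower (Rabs V) (p - 1)) in *.
  assert ((1 + B0 / 2) * (V * V) < V * (Y * V) / (p + 1)).
  { apply Rmult_lt_reg_r with (p + 1); [lra|].
    replace (V * (Y * V) / (p + 1) * (p + 1)) with (Y * (V * V)) by (field; lra).
    replace ((1 + B0 / 2) * (V * V) * (p + 1)) with ((p + 1) * (1 + B0 / 2) * (V * V)) by ring.
    apply Rmult_lt_compat_r; lra. }
  assert (b * (V * V) <= B0 * (V * V)) by (apply Rmult_le_compat_r; nra).
  pose proof (pow2_ge_0 W). simpl in HE. nra.
Qed.

Lemma energy_le_1_bounds p b P1 B0 d V W : 1 < p -> 0 < d <= p - 1 -> p + 1 <= P1 ->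
  0 <= b <= B0 -> 0 <= W ^ 2 / 2 - b * V ^ 2 / 2 + nl_prim p V <= 1 ->
  Rabs V <= vbound P1 B0 d /\ Rabs W <= wbound P1 B0 d.
Proof.
  intros Hp Hd HP1 Hb HE.
  assert (HV := energy_le_1_vbound p b P1 B0 d V W Hp Hd HP1 Hb (proj2 HE)).
  split; [exact HV|].
  set (K1 := vbound P1 B0 d) in *.
  assert (HK2 : 1 <= wbound P1 B0 d).
  { unfold wbound. fold K1.
    assert (0 <= B0 * K1 ^ 2) by (apply Rmult_le_pos; [lra|apply pow2_ge_0]). lra. }
  assert (HV2 : V ^ 2 <= K1 ^ 2) by (rewrite <- pow2_abs; pose proof (Rabs_pos V); nra).
  assert (b * V ^ 2 <= B0 * K1 ^ 2) by (apply Rmult_le_compat; nra).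
  pose proof (nl_prim_ge0 p V Hp).
  set (K2 := wbound P1 B0 d) in *.
  assert (HW2 : W ^ 2 <= K2) by (unfold K2, wbound; fold K1; lra).
  rewrite <- (Rabs_right K2) by lra.
  apply Rsqr_le_abs_0. unfold Rsqr. simpl in HW2. nra.
Qed.

Lemma nodal_radii_lt m u rad : nodal_radii m u rad ->
  forall a b, (1 <= a)%nat -> (a < b <= m)%nat -> rad a < rad b.
Proof.
  intros [_ [_ [_ [Hinc _]]]] a b Ha Hab.
  induction b as [|b IH]; [lia|].
  destruct (Nat.eq_dec a b) as [->|Hne]; [apply Hinc; lia|].
  apply Rlt_trans with (rad b); [apply IH; lia|apply Hinc; lia].
Qed.

Lemma nodal_radii_bounds m u rad : (2 <= m)%nat -> nodal_radii m u rad ->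
  forall j, (1 <= j <= m)%nat -> 0 < rad j <= 1.
Proof.
  intros Hm Hn j Hj. pose proof Hn as [_ [Hm1 [Hz _]]].
  destruct (Nat.eq_dec j m) as [->|Hne]; [rewrite Hm1; lra|].
  destruct (Hz j ltac:(lia)) as [H _]; lra.
Qed.

(* Region j = 0 is the central one, [0, rad 1). *)
Lemma nodal_region_neq0 m u rad : (2 <= m)%nat -> nodal_radii m u rad ->
  forall j, (j <= m - 1)%nat -> forall r,
  (if Nat.eq_dec j 0 then 0 <= r else rad j < r) -> r < rad (S j) -> u r <> 0.
Proof.
  intros Hm Hn j Hj r Hr1 Hr2 Hu.
  pose proof Hn as [_ [_ [_ [_ Hall]]]].
  assert (HSj := nodal_radii_bounds m u rad Hm Hn (S j) ltac:(lia)).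
  assert (Hr0 : 0 <= r).
  { destruct (Nat.eq_dec j 0); [assumption|].
    pose proof (nodal_radii_bounds m u rad Hm Hn j ltac:(lia)). lra. }
  destruct (Hall r ltac:(lra) Hu) as [k [Hk ->]].
  assert (Hlt := nodal_radii_lt m u rad Hn).
  destruct (Nat.eq_dec j 0) as [->|Hj0].
  - destruct (Nat.eq_dec k 1) as [->|Hk1]; [lra|].
    specialize (Hlt 1%nat k ltac:(lia) ltac:(lia)). lra.
  - destruct (Compare_dec.le_lt_dec k j) as [Hkj|Hkj].
    + destruct (Nat.eq_dec k j) as [->|Hne]; [lra|].
      specialize (Hlt k j ltac:(lia) ltac:(lia)). lra.
    + destruct (Nat.eq_dec k (S j)) as [->|Hne]; [lra|].
      specialize (Hlt (S j) k ltac:(lia) ltac:(lia)). lra.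
Qed.

Definition crit_const (m : nat) (P1 B0 d : R) : R :=
  (6 * INR m + 2) * vbound P1 B0 d * wbound P1 B0 d.

Lemma crit_const_pos m P1 B0 d : 1 <= P1 -> 0 <= B0 -> 0 < d -> 0 < crit_const m P1 B0 d.
Proof.
  intros HP HB Hd. pose proof (vbound_ge1 P1 B0 d HP HB Hd). pose proof (wbound_pos P1 B0 d HB).
  pose proof (pos_INR m). unfold crit_const. repeat apply Rmult_lt_0_compat; lra.
Qed.

Section Nodal_solution.
Variables (N m : nat) (p : R) (u u1 u2 : R -> R) (rad s : nat -> R).
Hypothesis Hm : (2 <= m)%nat.
Hypothesis Hp : 1 < p.
Hypothesis Hsol : radial_sol N p u u1 u2.
Hypothesis Hnod : nodal_radii m u rad.
Hypothesis Hcrit : crit_points m u1 rad s.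
Hypothesis HA : 0 < ef_A N p.
Hypothesis Hb : 0 <= ef_b N p.

Local Notation v := (ef_v p u).
Local Notation w := (ef_w p u u1).
Local Notation energy := (ef_energy N p u u1).

Lemma u0_pos : 0 < u 0.
Proof. apply Hnod. Qed.

Lemma crit_positions j : (1 <= j <= m - 1)%nat ->
  0 < rad j /\ rad j < s j < rad (S j) /\ rad (S j) <= 1.
Proof.
  intros Hj. destruct (Hcrit j Hj) as [Hs _].
  pose proof (nodal_radii_bounds m u rad Hm Hnod j ltac:(lia)).
  pose proof (nodal_radii_bounds m u rad Hm Hnod (S j) ltac:(lia)). lra.
Qed.

Lemma ef_v_first_region_pos t : t < ln (rad 1) -> 0 < v t.
Proof.
  intros Ht. destruct Hsol as [_ [Hd1 _]].
  assert (Hr1 := nodal_radii_bounds m u rad Hm Hnod 1 ltac:(lia)).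
  assert (Hr : 0 < exp t < rad 1).
  { split; [apply exp_pos|]. rewrite <- (exp_ln (rad 1)) by lra. now apply exp_increasing. }
  unfold ef_v. apply Rmult_lt_0_compat; [apply exp_pos|].
  destruct (Rlt_or_le 0 (u (exp t))) as [|Hle]; [assumption|exfalso].
  destruct (IVT_sign u 0 (exp t)) as [z [Hz Huz]].
  - lra.
  - intros x Hx. apply (derivable_pt_lim_continuity_pt _ _ _ (Hd1 x ltac:(lra))).
  - pose proof u0_pos. nra.
  - apply (nodal_region_neq0 m u rad Hm Hnod 0 ltac:(lia) z); simpl; [lra|lra|exact Huz].
Qed.

Lemma ef_v_region_sign j : (1 <= j <= m - 1)%nat ->
  exists sg, (sg = 1 \/ sg = -1) /\
    forall t, ln (rad j) < t < ln (rad (S j)) -> 0 < sg * v t.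
Proof.
  intros Hj. pose proof (crit_positions j Hj) as Hpos.
  set (a := ln (rad j)). set (b := ln (rad (S j))).
  assert (Hab : a < b) by (apply ln_increasing; lra).
  assert (Hb0 : b <= 0) by (apply ln_nonpos; lra).
  assert (Hsame : forall x t, a < x < b -> a < t < b -> 0 < v x * v t).
  { apply nonvanishing_same_sign.
    - intros x Hx. exact (derivable_pt_lim_continuity_pt _ _ _
                            (ef_v_derive N p u u1 u2 Hsol x ltac:(lra))).
    - intros x Hx. unfold ef_v. apply Rmult_integral_contrapositive. split.
      + apply Rgt_not_eq, exp_pos.
      + pose proof (exp_between_ln x (rad j) (rad (S j)) ltac:(lra) ltac:(lra) Hx).
        apply (nodal_region_neq0 m u rad Hm Hnod j ltac:(lia));
          [destruct (Nat.eq_dec j 0); [lia|]|]; lra. }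
  set (x0 := (a + b) / 2).
  destruct (Rlt_or_le 0 (v x0)) as [Hpos0|Hneg0].
  - exists 1. split; [now left|]. intros t Ht.
    specialize (Hsame x0 t ltac:(unfold x0; lra) Ht). nra.
  - exists (-1). split; [now right|]. intros t Ht.
    specialize (Hsame x0 t ltac:(unfold x0; lra) Ht). nra.
Qed.

Lemma ef_v_nodal_zero j : (1 <= j <= m - 1)%nat -> v (ln (rad j)) = 0.
Proof.
  intros Hj. pose proof (crit_positions j Hj).
  unfold ef_v. rewrite exp_ln by lra. destruct Hnod as [_ [_ [Hz _]]].
  rewrite (proj2 (Hz j Hj)). ring.
Qed.

Lemma ef_w_at_crit j : (1 <= j <= m - 1)%nat -> w (ln (s j)) = ef_c p * v (ln (s j)).
Proof.
  intros Hj. pose proof (crit_positions j Hj).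
  unfold ef_w, ef_v. rewrite exp_ln by lra. rewrite (proj1 (proj2 (Hcrit j Hj))). ring.
Qed.

Lemma ef_prim_le_energy_at_crit j : (1 <= j <= m - 1)%nat ->
  nl_prim p (v (ln (s j))) <= energy (ln (s j)).
Proof.
  intros Hj. unfold ef_energy. rewrite ef_w_at_crit by exact Hj.
  assert (Hc : 0 < ef_c p) by (apply ef_c_pos, Hp).
  assert (Hcb : ef_c p ^ 2 - ef_b N p = ef_c p * ef_A N p) by (unfold ef_b, ef_A; ring).
  assert (0 <= (ef_c p ^ 2 - ef_b N p) * v (ln (s j)) ^ 2)
    by (rewrite Hcb; apply Rmult_le_pos; [nra|apply pow2_ge_0]).
  assert (0 <= (ef_c p * v (ln (s j))) ^ 2 / 2 - ef_b N p * v (ln (s j)) ^ 2 / 2); [|lra].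
  replace ((ef_c p * v (ln (s j))) ^ 2 / 2 - ef_b N p * v (ln (s j)) ^ 2 / 2)
    with ((ef_c p ^ 2 - ef_b N p) * v (ln (s j)) ^ 2 / 2) by field. lra.
Qed.

Lemma ef_energy_gain_step K1 K2 j sg X Y : (1 <= j <= m - 1)%nat -> X < ln (rad j) ->
  (sg = 1 \/ sg = -1) -> (forall t, X <= t < ln (rad j) -> 0 < sg * v t) -> 0 < sg * w X ->
  X <= Y <= ln (s j) -> (forall t, X <= t <= Y -> Rabs (v t) <= K1 /\ Rabs (w t) <= K2) ->
  energy Y <= energy X + 3 * (2 * ef_A N p * K1 * K2).
Proof.
  intros Hj HX Hsg Hreg HwX HY Hbd. pose proof (crit_positions j Hj) as Hpos.
  destruct (ef_v_region_sign j Hj) as [sg' [Hsg' Hreg']].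
  assert (HsS : ln (rad j) < ln (s j) < ln (rad (S j))) by (split; apply ln_increasing; lra).
  assert (HS0 : ln (rad (S j)) <= 0) by (apply ln_nonpos; lra).
  apply (energy_gain_nodal_step v w (ef_rhs N p u u1) energy (ef_A N p)
           (ef_v_derive N p u u1 u2 Hsol) (ef_w_derive N p u u1 u2 Hp Hsol)
           (ef_energy_derive N p u u1 u2 Hp Hsol) (Rlt_le _ _ HA)
           (ef_w_zero_transversal N p u u1 u2 Hp Hsol u0_pos HA Hb)
           K1 K2 sg sg' X (ln (rad j)) (ln (s j)) Y); auto; try lra.
  - intros t Ht. apply Hreg'. lra.
  - apply ef_v_nodal_zero, Hj.
  - rewrite ef_w_at_crit by exact Hj. specialize (Hreg' (ln (s j)) HsS).
    pose proof (ef_c_pos p Hp). nra.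
Qed.

Lemma ef_energy_gain_upto K1 K2 tau : tau < ln (rad 1) -> 0 < w tau ->
  forall j, (1 <= j <= m - 1)%nat -> forall Y, tau <= Y <= ln (s j) ->
  (forall t, tau <= t <= Y -> Rabs (v t) <= K1 /\ Rabs (w t) <= K2) ->
  energy Y <= energy tau + 3 * INR j * (2 * ef_A N p * K1 * K2).
Proof.
  intros Htau Hw0. induction j as [|j IH]; intros Hj Y HY Hbd; [lia|].
  assert (HD : 0 <= 2 * ef_A N p * K1 * K2).
  { destruct (Hbd tau ltac:(lra)) as [Hv Hw].
    pose proof (Rabs_pos (v tau)). pose proof (Rabs_pos (w tau)).
    assert (0 <= ef_A N p * K1) by (apply Rmult_le_pos; lra).
    assert (0 <= ef_A N p * K1 * K2) by (apply Rmult_le_pos; lra). lra. }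
  rewrite S_INR.
  destruct (Nat.eq_dec j 0) as [->|Hj0].
  - rewrite Rplus_0_l, Rmult_1_r.
    apply (ef_energy_gain_step K1 K2 1 1 tau Y); auto; try lia; try lra.
    intros t Ht. rewrite Rmult_1_l. apply ef_v_first_region_pos. lra.
  - pose proof (crit_positions j ltac:(lia)) as Hj'.
    pose proof (crit_positions (S j) Hj) as HSj. pose proof (crit_positions 1 ltac:(lia)) as H1.
    assert (Hr1j : rad 1 <= rad j).
    { destruct (Nat.eq_dec j 1) as [->|]; [lra|].
      left; apply (nodal_radii_lt m u rad Hnod); lia. }
    assert (Htj : tau < ln (s j)).
    { apply Rlt_trans with (ln (rad 1)); [exact Htau|apply ln_increasing; lra]. }
    pose proof (pos_INR j).
    destruct (Rle_or_lt Y (ln (s j))) as [HYs|HYs].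
    + assert (energy Y <= energy tau + 3 * INR j * (2 * ef_A N p * K1 * K2))
        by (apply IH; [lia|lra|exact Hbd]).
      nra.
    + assert (IHs : energy (ln (s j)) <= energy tau + 3 * INR j * (2 * ef_A N p * K1 * K2)).
      { apply IH; [lia|lra|]. intros t Ht. apply Hbd. lra. }
      destruct (ef_v_region_sign j ltac:(lia)) as [sg [Hsg Hreg]].
      assert (Hsj : ln (rad j) < ln (s j) < ln (rad (S j))) by (split; apply ln_increasing; lra).
      assert (energy Y <= energy (ln (s j)) + 3 * (2 * ef_A N p * K1 * K2)); [|lra].
      apply (ef_energy_gain_step K1 K2 (S j) sg (ln (s j)) Y); auto; try lra.
      * intros t Ht. apply Hreg. lra.
      * rewrite ef_w_at_crit by lia. specialize (Hreg (ln (s j)) Hsj).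
        pose proof (ef_c_pos p Hp). nra.
      * intros t Ht. apply Hbd. lra.
Qed.

Lemma ef_energy_gain_below_1 P1 B0 d i tau : 0 < d <= p - 1 -> p + 1 <= P1 ->
  ef_b N p <= B0 -> (1 <= i <= m - 1)%nat -> tau < ln (rad 1) -> 0 < w tau ->
  forall Y, tau <= Y <= ln (s i) -> energy Y <= 1 ->
  energy Y <= energy tau + 3 * INR i * (2 * ef_A N p * vbound P1 B0 d * wbound P1 B0 d).
Proof.
  intros Hd HP1 HB0 Hi Htau Hw0 Y HY HY1.
  pose proof (crit_positions i Hi) as Hpi.
  assert (HSi : ln (s i) < 0) by (rewrite <- ln_1; apply ln_increasing; lra).
  apply (ef_energy_gain_upto _ _ tau Htau Hw0 i Hi Y HY).
  intros t Ht. apply (energy_le_1_bounds p (ef_b N p) P1 B0 d); try lra.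
  split; [apply (ef_energy_ge0 N p u u1 u2 Hp Hsol u0_pos); lra|].
  apply Rle_trans with (energy Y); [|exact HY1].
  apply (ef_energy_mono N p u u1 u2); auto; lra.
Qed.

(* Start from a tau where the energy is at most D := 2 A K1 K2; up to ln s_i it then
   gains at most 3 i D, so it never reaches level 1. *)
Lemma ef_crit_prim_le P1 B0 d i : 0 < d <= p - 1 -> p + 1 <= P1 -> ef_b N p <= B0 ->
  (1 <= i <= m - 1)%nat -> crit_const m P1 B0 d * ef_A N p < 1 ->
  nl_prim p (v (ln (s i))) <= crit_const m P1 B0 d * ef_A N p.
Proof.
  intros Hd HP1 HB0 Hi Hsmall.
  set (D := 2 * ef_A N p * vbound P1 B0 d * wbound P1 B0 d).
  assert (HD : 0 < D).
  { pose proof (vbound_ge1 P1 B0 d ltac:(lra) ltac:(lra) ltac:(lra)).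
    pose proof (wbound_pos P1 B0 d ltac:(lra)).
    unfold D. repeat apply Rmult_lt_0_compat; lra. }
  assert (HC : crit_const m P1 B0 d * ef_A N p = (3 * INR m + 1) * D)
    by (unfold crit_const, D; ring).
  rewrite HC in *.
  pose proof (crit_positions 1 ltac:(lia)) as H1. pose proof (crit_positions i Hi) as Hpi.
  assert (Hmi : INR i <= INR m) by (apply le_INR; lia).
  assert (HD1 : D < 1) by (pose proof (pos_INR m); nra).
  destruct (ef_near_minus_infty N p u u1 u2 Hp Hsol u0_pos D (ln (rad 1)) HD)
    as [tau [Htau Hnear]].
  destruct (Hnear tau ltac:(lra)) as [_ [Hw0 HHtau]]. pose proof (Rle_abs (energy tau)).
  assert (Hr1i : ln (rad 1) <= ln (s i)).
  { left. apply ln_increasing; [lra|].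
    destruct (Nat.eq_dec i 1) as [->|]; [lra|].
    apply Rlt_trans with (rad i); [apply (nodal_radii_lt m u rad Hnod); lia|lra]. }
  assert (HSi : ln (s i) < 0) by (rewrite <- ln_1; apply ln_increasing; lra).
  assert (Hgain : forall Y, tau <= Y <= ln (s i) -> energy Y <= 1 ->
            energy Y <= (3 * INR m + 1) * D).
  { intros Y HY HY1.
    pose proof (ef_energy_gain_below_1 P1 B0 d i tau Hd HP1 HB0 Hi Htau Hw0 Y HY HY1) as Hg.
    fold D in Hg. nra. }
  assert (HS1 : energy (ln (s i)) <= 1).
  { destruct (Rle_or_lt (energy (ln (s i))) 1) as [|Hgt]; [assumption|exfalso].
    destruct (IVT_sign (fun t => energy t - 1) tau (ln (s i)) ltac:(lra)) as [Y [HY HY1]].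
    - intros x Hx. apply continuity_pt_minus; [|apply continuity_pt_const; now intros ? ?].
      exact (derivable_pt_lim_continuity_pt _ _ _
               (ef_energy_derive N p u u1 u2 Hp Hsol x ltac:(lra))).
    - simpl. nra.
    - simpl in HY1. specialize (Hgain Y HY ltac:(lra)). lra. }
  apply Rle_trans with (energy (ln (s i))); [apply ef_prim_le_energy_at_crit, Hi|].
  apply Hgain; lra.
Qed.

End Nodal_solution.

(** * The limit p -> p_S *)

Lemma INR_ge3 N : (3 <= N)%nat -> 3 <= INR N.
Proof. intros HN. replace 3 with (INR 3) by (simpl; ring). now apply le_INR. Qed.

Lemma pS_minus_1 N : (3 <= N)%nat -> pS N - 1 = 4 / (INR N - 2).
Proof. intros HN. pose proof (INR_ge3 N HN). unfold pS. field. lra. Qed.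

Lemma ef_A_eq N p : 1 < p -> ef_A N p = 4 / (p - 1) + 2 - INR N.
Proof. intros Hp. unfold ef_A, ef_c. field. lra. Qed.

Lemma ef_A_pos N p : (3 <= N)%nat -> 1 < p < pS N -> 0 < ef_A N p.
Proof.
  intros HN Hp. pose proof (INR_ge3 N HN). pose proof (pS_minus_1 N HN).
  rewrite ef_A_eq by lra.
  assert (INR N - 2 < 4 / (p - 1)); [|lra].
  apply Rmult_lt_reg_r with (p - 1); [lra|].
  replace (4 / (p - 1) * (p - 1)) with 4 by (field; lra).
  assert (Hp1 : (INR N - 2) * (p - 1) < (INR N - 2) * (4 / (INR N - 2)))
    by (apply Rmult_lt_compat_l; lra).
  replace ((INR N - 2) * (4 / (INR N - 2))) with 4 in Hp1 by (field; lra). exact Hp1.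
Qed.

Lemma ef_A_small N eta : (3 <= N)%nat -> 0 < eta ->
  exists delta, 0 < delta /\ forall p, 1 < p -> pS N - delta < p -> ef_A N p < eta.
Proof.
  intros HN Heta. pose proof (INR_ge3 N HN). pose proof (pS_minus_1 N HN).
  assert (Hq : 4 / (INR N - 2 + eta) < 4 / (INR N - 2))
    by (apply Rmult_lt_compat_l; [lra|apply Rinv_lt_contravar; nra]).
  exists (pS N - 1 - 4 / (INR N - 2 + eta)). split; [lra|].
  intros p Hp Hpd. rewrite ef_A_eq by lra.
  assert (4 / (p - 1) < INR N - 2 + eta); [|lra].
  apply Rmult_lt_reg_r with (p - 1); [lra|].
  replace (4 / (p - 1) * (p - 1)) with 4 by (field; lra).
  assert (Hp1 : (INR N - 2 + eta) * (4 / (INR N - 2 + eta)) < (INR N - 2 + eta) * (p - 1))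
    by (apply Rmult_lt_compat_l; lra).
  replace ((INR N - 2 + eta) * (4 / (INR N - 2 + eta))) with 4 in Hp1 by (field; lra).
  lra.
Qed.

Lemma ef_b_bounds N p : (3 <= N)%nat -> 3 / (INR N - 2) <= p - 1 ->
  0 <= ef_b N p <= (INR N - 2) ^ 2 / 4.
Proof.
  intros HN Hp. pose proof (INR_ge3 N HN).
  assert (Hp1 : 0 < p - 1) by (pose proof (Rdiv_lt_0_compat 3 (INR N - 2)); lra).
  assert (Hc : 0 < ef_c p <= INR N - 2).
  { split; [apply Rdiv_lt_0_compat; lra|]. unfold ef_c.
    apply Rmult_le_reg_r with (p - 1); [lra|].
    replace (2 / (p - 1) * (p - 1)) with 2 by (field; lra).
    apply Rmult_le_compat_l with (r := INR N - 2) in Hp; [|lra].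
    replace ((INR N - 2) * (3 / (INR N - 2))) with 3 in Hp by (field; lra). lra. }
  unfold ef_b. split; [apply Rmult_le_pos; lra|].
  assert (0 <= (ef_c p - (INR N - 2) / 2) ^ 2) by apply pow2_ge_0.
  replace ((INR N - 2) ^ 2 / 4) with (ef_c p * (INR N - 2 - ef_c p) + (ef_c p - (INR N - 2) / 2) ^ 2)
    by field.
  lra.
Qed.

Lemma scaled_crit_value p u r : 1 < p -> 0 < r -> u r <> 0 ->
  r * Rpower (Rabs (u r)) ((p - 1) / 2) = Rpower (Rabs (ef_v p u (ln r))) ((p - 1) / 2).
Proof.
  intros Hp Hr Hu. unfold ef_v. rewrite exp_ln by exact Hr.
  rewrite Rabs_mult, (Rabs_right (exp _)) by (left; apply exp_pos).
  rewrite <- Rpower_mult_distr by (try apply exp_pos; apply Rabs_pos_lt, Hu).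
  f_equal. unfold Rpower. rewrite ln_exp.
  replace ((p - 1) / 2 * (ef_c p * ln r)) with (ln r) by (unfold ef_c; field; lra).
  symmetry. now apply exp_ln.
Qed.

Lemma Rpower_root_le y X p e : 1 < p -> 0 < y -> Rpower y (p + 1) <= X -> X <= 1 ->
  0 < e <= (p - 1) / (2 * (p + 1)) -> Rpower y ((p - 1) / 2) <= Rpower X e.
Proof.
  intros Hp Hy HyX HX1 He.
  replace ((p - 1) / 2) with ((p + 1) * ((p - 1) / (2 * (p + 1)))) by (field; lra).
  rewrite <- Rpower_mult.
  apply Rle_trans with (Rpower X ((p - 1) / (2 * (p + 1)))).
  - apply Rle_Rpower_l; [apply Rlt_le, Rdiv_lt_0_compat; lra|split; [apply Rpower_pos|exact HyX]].
  - assert (0 < X) by (pose proof (Rpower_pos y (p + 1)); lra).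
    unfold Rpower. apply exp_le_compat.
    assert (ln X <= 0) by (apply ln_nonpos; lra). nra.
Qed.

Lemma crit_scaled_le N m p u u1 u2 rad s i P1 B0 d :
  (2 <= m)%nat -> 1 < p -> radial_sol N p u u1 u2 -> nodal_radii m u rad ->
  crit_points m u1 rad s -> 0 < ef_A N p -> 0 <= ef_b N p <= B0 -> 0 < d <= p - 1 ->
  p + 1 <= P1 -> (1 <= i <= m - 1)%nat -> P1 * crit_const m P1 B0 d * ef_A N p <= 1 ->
  0 < rad i * Rpower (Rabs (u (s i))) ((p - 1) / 2) < s i * Rpower (Rabs (u (s i))) ((p - 1) / 2)
  /\ s i * Rpower (Rabs (u (s i))) ((p - 1) / 2)
       <= Rpower (P1 * crit_const m P1 B0 d * ef_A N p) (d / (2 * P1)).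
Proof.
  intros Hm Hp Hsol Hnod Hcrit HA Hb Hd HP1 Hi HX.
  pose proof (crit_positions m u u1 rad s Hm Hnod Hcrit i Hi) as Hpos.
  assert (HC := crit_const_pos m P1 B0 d ltac:(lra) ltac:(lra) ltac:(lra)).
  set (C := crit_const m P1 B0 d) in *.
  assert (Husi : u (s i) <> 0).
  { apply (nodal_region_neq0 m u rad Hm Hnod i ltac:(lia));
      [destruct (Nat.eq_dec i 0); [lia|]|]; lra. }
  pose proof (Rpower_pos (Rabs (u (s i))) ((p - 1) / 2)).
  split; [split; [apply Rmult_lt_0_compat|apply Rmult_lt_compat_r]; lra|].
  rewrite scaled_crit_value by (auto; lra).
  set (V := ef_v p u (ln (s i))).
  assert (HV : V <> 0).
  { unfold V, ef_v. rewrite exp_ln by lra.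
    apply Rmult_integral_contrapositive. split; [apply Rgt_not_eq, exp_pos|exact Husi]. }
  assert (HCA0 : 0 < C * ef_A N p) by (apply Rmult_lt_0_compat; lra).
  assert (HCA : C * ef_A N p < 1) by nra.
  assert (Hprim := ef_crit_prim_le N m p u u1 u2 rad s Hm Hp Hsol Hnod Hcrit HA (proj1 Hb)
                     P1 B0 d i Hd HP1 (proj2 Hb) Hi HCA).
  fold C V in Hprim. rewrite nl_prim_neq0 in Hprim by assumption.
  apply (Rpower_root_le _ _ p); [lra|apply Rabs_pos_lt, HV| |exact HX|].
  - apply Rmult_le_reg_r with (/ (p + 1)); [apply Rinv_0_lt_compat; lra|].
    apply Rle_trans with (C * ef_A N p); [exact Hprim|].
    replace (P1 * C * ef_A N p * / (p + 1)) with (C * ef_A N p * (P1 / (p + 1))) by (field; lra).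
    assert (1 <= P1 / (p + 1)).
    { apply Rmult_le_reg_r with (p + 1); [lra|]. replace (P1 / (p + 1) * (p + 1)) with P1 by (field; lra). lra. }
    nra.
  - split; [apply Rdiv_lt_0_compat; lra|].
    unfold Rdiv. apply Rmult_le_compat; [lra|apply Rlt_le, Rinv_0_lt_compat; lra|lra|].
    apply Rinv_le_contravar; lra.
Qed.

Lemma crit_scaled_tends_to_0 N m (u u1 u2 : R -> R -> R) (rad s : R -> nat -> R) i :
  (3 <= N)%nat -> (2 <= m)%nat ->
  (forall p, 1 < p < pS N -> radial_sol N p (u p) (u1 p) (u2 p) /\
     nodal_radii m (u p) (rad p) /\ crit_points m (u1 p) (rad p) (s p)) ->
  (1 <= i <= m - 1)%nat -> forall eps, 0 < eps -> exists delta, 0 < delta /\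
  forall p, 1 < p -> pS N - delta < p < pS N ->
    0 < rad p i * Rpower (Rabs (u p (s p i))) ((p - 1) / 2)
      < s p i * Rpower (Rabs (u p (s p i))) ((p - 1) / 2) /\
    s p i * Rpower (Rabs (u p (s p i))) ((p - 1) / 2) < eps.
Proof.
  intros HN Hm Hu Hi eps Heps.
  pose proof (INR_ge3 N HN) as Hn. pose proof (pS_minus_1 N HN) as HpS.
  set (d := 3 / (INR N - 2)). set (P1 := pS N + 1). set (B0 := (INR N - 2) ^ 2 / 4).
  assert (Hd : 0 < d) by (apply Rdiv_lt_0_compat; lra).
  assert (HdpS : d + 1 / (INR N - 2) = pS N - 1) by (rewrite HpS; unfold d; field; lra).
  assert (Hgap : 0 < 1 / (INR N - 2)) by (apply Rdiv_lt_0_compat; lra).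
  assert (HP1 : 2 < P1) by (unfold P1; lra).
  assert (HC := crit_const_pos m P1 B0 d ltac:(lra) ltac:(unfold B0; nra) Hd).
  set (C := crit_const m P1 B0 d) in *. set (e := d / (2 * P1)).
  assert (He : 0 < e) by (apply Rdiv_lt_0_compat; lra).
  set (X0 := Rmin 1 (Rpower eps (/ e) / 2)).
  assert (HX0 : 0 < X0) by (apply Rmin_pos; [lra|apply Rdiv_lt_0_compat; [apply Rpower_pos|lra]]).
  assert (HX01 : X0 <= 1) by apply Rmin_l.
  assert (HX0e : X0 < Rpower eps (/ e)).
  { apply Rle_lt_trans with (Rpower eps (/ e) / 2); [apply Rmin_r|].
    pose proof (Rpower_pos eps (/ e)). lra. }
  assert (HPC : 0 < P1 * C) by (apply Rmult_lt_0_compat; lra).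
  destruct (ef_A_small N (X0 / (P1 * C)) HN ltac:(apply Rdiv_lt_0_compat; lra))
    as [delta [Hdelta HAsmall]].
  exists (Rmin delta (1 / (INR N - 2))). split; [apply Rmin_pos; lra|].
  intros p Hp Hpr.
  pose proof (Rmin_l delta (1 / (INR N - 2))). pose proof (Rmin_r delta (1 / (INR N - 2))).
  destruct (Hu p ltac:(lra)) as [Hsol [Hnod Hcrit]].
  assert (HA := ef_A_pos N p HN ltac:(lra)).
  assert (HX : P1 * C * ef_A N p < X0).
  { specialize (HAsmall p Hp ltac:(lra)).
    apply Rmult_lt_compat_l with (r := P1 * C) in HAsmall; [|exact HPC].
    replace (P1 * C * (X0 / (P1 * C))) with X0 in HAsmall
      by (field; split; apply Rgt_not_eq; lra).
    exact HAsmall. }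
  assert (HX1 : P1 * C * ef_A N p <= 1) by lra.
  destruct (crit_scaled_le N m p (u p) (u1 p) (u2 p) (rad p) (s p) i P1 B0 d Hm Hp Hsol Hnod
              Hcrit HA (ef_b_bounds N p HN ltac:(fold d; lra)) ltac:(lra)
              ltac:(unfold P1; lra) Hi HX1) as [Hpos Hle].
  split; [exact Hpos|]. apply Rle_lt_trans with (1 := Hle). fold C e.
  rewrite <- (Rpower_1 eps) by exact Heps. rewrite <- (Rinv_l e) by lra.
  rewrite <- Rpower_mult. apply Rlt_Rpower_l; [exact He|split; [nra|lra]].
Qed.

Theorem mainTheorem10 (N m : nat) (HN : (3 <= N)%nat) (Hm : (2 <= m)%nat)
  (u u1 u2 : R -> R -> R) (rad s : R -> nat -> R)
  (Hu : forall p, 1 < p < pS N ->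
     radial_sol N p (u p) (u1 p) (u2 p) /\
     nodal_radii m (u p) (rad p) /\
     crit_points m (u1 p) (rad p) (s p)) :
  forall i, (1 <= i <= m - 1)%nat ->
    tends_to_0_left (fun p => s p i * Rpower (Rabs (u p (s p i))) ((p - 1) / 2)) (pS N) /\
    tends_to_0_left (fun p => rad p i * Rpower (Rabs (u p (s p i))) ((p - 1) / 2)) (pS N).
Proof.
  intros i Hi.
  pose proof (crit_scaled_tends_to_0 N m u u1 u2 rad s i HN Hm Hu Hi) as Hsmall.
  split; intros eps Heps; destruct (Hsmall eps Heps) as [delta [Hdelta Hp]];
    exists delta; (split; [exact Hdelta|]); intros p Hp1 Hpr;
    specialize (Hp p Hp1 Hpr); rewrite Rabs_right; lra.
Qed.
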